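(* Let $G$ be a finite connected graph in which every induced cycle is a square (an induced $4$-cycle) and in which the two-squares graph does not embed. Then $G$ is $\mathcal{C}$-$\mathrm{HH}$.
   Context: Graphs are simple; subgraphs are induced; ''embeds'' means is isomorphic to an induced subgraph. A homomorphism maps edges to edges. A graph $G$ is $\mathcal{C}$-$\mathrm{HH}$ if every homomorphism from a finite connected induced subgraph of $G$ into $G$ extends to a homomorphism $G\to G$. The two-squares graph is the $6$-cycle $v_1\dots v_6v_1$ with the single chord $v_3v_6$. *)

From mathcomp Require Import all_boot.
Set Implicit Arguments. Unset Strict Implicit. Unset Printing Implicit Defensive.

(* A finite simple graph: vertex type T : finType, adjacency e : rel T,
   assumed symmetric and irreflexive (stated as hypotheses of the theorem). *)

Definition induced_connected (T : finType) (e : rel T) (S : {set T}) : Prop :=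
  S != set0 /\
  forall x y, x \in S -> y \in S ->
    connect [rel u v | [&& u \in S, v \in S & e u v]] x y.

Definition graph_connected (T : finType) (e : rel T) : Prop :=
  induced_connected e [set: T].

Definition hom_on (T : finType) (e : rel T) (S : {set T}) (f : T -> T) : Prop :=
  forall x y, x \in S -> y \in S -> e x y -> e (f x) (f y).

Definition hom (T : finType) (e : rel T) (g : T -> T) : Prop :=
  forall x y, e x y -> e (g x) (g y).

Definition C_HH (T : finType) (e : rel T) : Prop :=
  forall (S : {set T}) (f : T -> T),
    induced_connected e S -> hom_on e S f ->
    exists g : T -> T, hom e g /\ {in S, forall x, g x = f x}.

Definition cycle_adj (k : nat) (i j : 'I_k) : bool :=
  (val j == (val i).+1 %% k) || (val i == (val j).+1 %% k).

Definition induced_cycle (T : finType) (e : rel T) (k : nat) (c : 'I_k -> T) : Prop :=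
  3 <= k /\ injective c /\ forall i j, e (c i) (c j) = cycle_adj i j.

Definition all_induced_cycles_squares (T : finType) (e : rel T) : Prop :=
  forall (k : nat) (c : 'I_k -> T), induced_cycle e c -> k = 4.

(* Two-squares graph on 'I_6: vertex i stands for v_(i+1); the 6-cycle
   v1...v6v1 plus the chord v3v6, i.e. indices 2 and 5. *)
Definition two_squares_adj (i j : 'I_6) : bool :=
  cycle_adj i j || ((val i == 2) && (val j == 5)) || ((val i == 5) && (val j == 2)).

Definition embeds_two_squares (T : finType) (e : rel T) : Prop :=
  exists f : 'I_6 -> T, injective f /\ forall i j, e (f i) (f j) = two_squares_adj i j.

(* Extend the homomorphism one vertex at a time.  Let v be a vertex outside
   the connected set X with a neighbour in X.  Two neighbours u1, u2 of v in X
   have a common neighbour in X: along a shortest path from u1 to u2 inside X,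
   either an inner vertex w is adjacent to v, and the common neighbours of
   (u1, w) and of (w, u2) combine because the two-squares graph does not embed,
   or the path closes up with v into an induced cycle, which must be a square.
   The same two-squares argument turns these pairwise common neighbours into a
   vertex a of X adjacent to all neighbours of v in X, and v is sent to f a. *)

From Stdlib Require Import Classical.
From mathcomp Require Import all_boot zify.
Set Implicit Arguments. Unset Strict Implicit. Unset Printing Implicit Defensive.

Section SeqEnds.
Variables (T : Type) (x0 : T).
Implicit Types t : seq T.

Lemma head_drop n t : n < size t -> head x0 (drop n t) = nth x0 t n.
Proof. by move=> hn; rewrite -nth0 nth_drop addn0. Qed.

Lemma last_take n t : 0 < n <= size t -> last x0 (take n t) = nth x0 t n.-1.
Proof.
move=> hn; rewrite -nth_last size_takel ?nth_take //; lia.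
Qed.

Lemma head_take n t : 0 < n -> head x0 (take n t) = head x0 t.
Proof. by case: n => // n _; case: t. Qed.

Lemma last_drop y n t : n < size t -> last y (drop n t) = last x0 t.
Proof.
move=> hn; rewrite -(nth_last y) -(nth_last x0) nth_drop size_drop.
rewrite (set_nth_default x0); last lia.
by congr nth; lia.
Qed.

End SeqEnds.

Section Walks.
Variables (T : eqType) (r : rel T) (x0 : T).
Implicit Types t u : seq T.

Local Notation "t `_ i" := (nth x0 t i).

Definition walk t := forall k, k.+1 < size t -> r t`_k t`_k.+1.

Definition chordless t := forall i j, i.+1 < j -> j < size t -> ~~ r t`_i t`_j.

Definition shorter_walk u t := [/\ walk u, {subset u <= t}, size u < size t,
  head x0 u = head x0 t & last x0 u = last x0 t].

Lemma walk_take n t : walk t -> walk (take n t).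
Proof.
move=> Wt k; rewrite size_take_min => hk.
rewrite !nth_take; try lia.
by apply: Wt; lia.
Qed.

Lemma walk_drop n t : walk t -> walk (drop n t).
Proof.
move=> Wt k; rewrite size_drop => hk.
by rewrite !nth_drop addnS; apply: Wt; lia.
Qed.

Lemma walk_cat t u : walk t -> walk u ->
  (0 < size t -> 0 < size u -> r (last x0 t) (head x0 u)) -> walk (t ++ u).
Proof.
move=> Wt Wu join k; rewrite size_cat => hk; rewrite !nth_cat.
case: (ltngtP k.+1 (size t)) => hkt; first exact: Wt.
- rewrite subSn; last lia.
  by apply: Wu; lia.
- rewrite -hkt subnn nth0 -[k]/(k.+1.-1) hkt nth_last.
  by apply: join; lia.
Qed.

Lemma shortcut_shorter t i j : walk t -> i < j < size t ->
  (0 < i -> r t`_i.-1 t`_j) -> (i = 0 -> t`_j = head x0 t) ->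
  shorter_walk (take i t ++ drop j t) t.
Proof.
move=> Wt /andP[ij jt] join_ij head_ij; split.
- apply: walk_cat; [exact: walk_take | exact: walk_drop |].
  rewrite size_take_min head_drop // => hi _.
  by rewrite last_take; [apply: join_ij | ]; lia.
- by move=> x; rewrite mem_cat => /orP[/mem_take|/mem_drop].
- rewrite size_cat size_drop size_takel; lia.
- case: i ij join_ij head_ij => [|i] _ _ => [/(_ erefl) <-|_].
    by rewrite take0 head_drop.
  by case: t {Wt jt}.
- by rewrite last_cat (last_drop x0).
Qed.

Lemma shorter_walk_of_not_uniq t : walk t -> ~~ uniq t -> exists u, shorter_walk u t.
Proof.
move=> Wt /(uniqPn x0)[i [j [ij jt tij]]].
exists (take i t ++ drop j t); apply: shortcut_shorter => //; first by rewrite ij.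
- by move=> i0; rewrite -tij; have := Wt i.-1; rewrite prednK //; apply; lia.
- by move=> i0; rewrite -tij i0 nth0.
Qed.

Lemma shorter_walk_of_chord t i j : walk t -> i.+1 < j < size t -> r t`_i t`_j ->
  exists u, shorter_walk u t.
Proof.
move=> Wt hij chord; exists (take i.+1 t ++ drop j t).
by apply: shortcut_shorter.
Qed.

Lemma path_walk x p : path r x p -> walk (x :: p).
Proof. by move/(pathP x0) => x_p k; apply: x_p. Qed.

Lemma shorter_or_induced_walk t : walk t ->
  (exists u, shorter_walk u t) \/ uniq t /\ chordless t.
Proof.
move=> Wt; have [t_uniq|/(shorter_walk_of_not_uniq Wt)] := boolP (uniq t); last by left.
case: (classic (exists i j, [/\ i.+1 < j, j < size t & r t`_i t`_j])).
  by move=> [i [j [ij jt chord]]]; left; apply: (shorter_walk_of_chord Wt _ chord); rewrite ij.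
move=> no_chord; right; split=> // i j ij jt; apply/negP => chord.
by apply: no_chord; exists i, j.
Qed.

End Walks.

Lemma succ_mod i n : i <= n -> i.+1 %% n.+1 = if i == n then 0 else i.+1.
Proof. by move=> le_in; case: eqP => [->|ne]; rewrite ?modnn // modn_small; lia. Qed.

Lemma two_squares_adj_sym : symmetric two_squares_adj.
Proof. by do 2![case=> [[|[|[|[|[|[|?]]]]]] ?] //]. Qed.

Lemma two_squares_adj_irr : irreflexive two_squares_adj.
Proof. by case=> [[|[|[|[|[|[|?]]]]]] ?]. Qed.

Lemma two_squares_twin_free (i j : 'I_6) :
  (forall k, two_squares_adj i k = two_squares_adj j k) -> i = j.
Proof.
move=> rows; apply/val_inj.
have {}rows k (hk : k < 6) := rows (Ordinal hk).
move: i j rows => [[|[|[|[|[|[|i]]]]]] hi] // [[|[|[|[|[|[|j]]]]]] hj] //= rows.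
all: first [ by have := rows 0 isT | by have := rows 1 isT | by have := rows 2 isT
  | by have := rows 3 isT | by have := rows 4 isT | by have := rows 5 isT ].
Qed.

Section SquareGraphs.
Variables (T : finType) (e : rel T).
Hypotheses (e_sym : symmetric e) (e_irr : irreflexive e).

Lemma boundary_edge (X : {set T}) x y : graph_connected e -> x \in X -> y \notin X ->
  exists u v, [/\ u \in X, v \notin X & e u v].
Proof.
move=> [_ G_connected] xX yX.
move: yX; have /connectP[p p_path ->] := G_connected x y (in_setT x) (in_setT y).
elim: p x p_path xX => [|z p IHp] x /=; first by move=> _ ->.
move=> /andP[/and3P[_ _ xz] p_path] xX.
by have [zX|zX] := boolP (z \in X); [apply: IHp | exists x, z].
Qed.

Lemma neighbour_exists x y : graph_connected e -> x != y -> exists z, e x z.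
Proof.
move=> [_ G_connected] xy.
have /connectP[[|z p] /= p_path y_last] := G_connected x y (in_setT x) (in_setT y).
  by rewrite y_last eqxx in xy.
by case/andP: p_path => /and3P[_ _ xz] _; exists z.
Qed.

Lemma induced_connected_setU1 (X : {set T}) u v :
  induced_connected e X -> u \in X -> e u v -> induced_connected e (v |: X).
Proof.
move=> [_ X_connected] uX uv; split; first by apply/set0Pn; exists v; rewrite setU11.
set r := [rel a b | _]; have X_r a b : a \in X -> b \in X -> connect r a b.
  move=> aX bX; apply: connect_sub (X_connected a b aX bX) => x y /and3P[xX yX xy].
  by apply: connect1; rewrite /= !inE xX yX xy !orbT.
have to_u a : a \in v |: X -> connect r a u /\ connect r u a.
  rewrite !inE => /predU1P[->|aX]; last by split; apply: X_r.
  by split; apply: connect1; rewrite /= !inE eqxx uX ?orbT // e_sym.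
by move=> a b /to_u[au _] /to_u[_ ub]; apply: connect_trans au ub.
Qed.

Lemma hom_on_setU1 (X : {set T}) (f : T -> T) v w : v \notin X -> hom_on e X f ->
  (forall z, z \in X -> e v z -> e w (f z)) ->
  hom_on e (v |: X) (fun z => if z == v then w else f z).
Proof.
move=> vX f_hom w_nbr a b; rewrite !inE.
have neq_v z : z \in X -> (z == v) = false by move=> zX; apply: contraNF vX => /eqP <-.
move=> /predU1P[->|aX] /predU1P[->|bX]; rewrite ?eqxx ?e_irr ?neq_v //.
- exact: w_nbr.
- by rewrite e_sym => vb; rewrite e_sym; apply: w_nbr.
- exact: f_hom.
Qed.

Lemma embeds_two_squaresP (c : 'I_6 -> T) :
  (forall i j : 'I_6, i < j -> e (c i) (c j) = two_squares_adj i j) ->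
  embeds_two_squares e.
Proof.
move=> c_adj.
have {}c_adj i j : e (c i) (c j) = two_squares_adj i j.
  case: (ltngtP i j) => [ij|ji|/val_inj ->]; first exact: c_adj.
  - by rewrite e_sym two_squares_adj_sym; apply: c_adj.
  - by rewrite e_irr two_squares_adj_irr.
exists c; split=> // i j cij; apply: two_squares_twin_free => k.
by rewrite -!c_adj cij.
Qed.

Lemma chordless_walk_adj x0 t : walk e x0 t -> chordless e x0 t ->
  forall i j, i < size t -> j < size t ->
  e (nth x0 t i) (nth x0 t j) = (j == i.+1) || (i == j.+1).
Proof.
move=> t_walk t_chordless.
have adj i j : i < j < size t -> e (nth x0 t i) (nth x0 t j) = (j == i.+1).
  move=> /andP[ij jt]; case: eqP => [ji|ne]; first by rewrite ji; apply: t_walk; rewrite -ji.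
  by apply/negbTE/t_chordless; lia.
move=> i j it jt; case: (ltngtP i j) => [ij|ji|->].
- by rewrite adj ?ij //; case: eqP; lia.
- by rewrite e_sym adj ?ji //; case: eqP; lia.
- by rewrite e_irr; case: eqP; lia.
Qed.

Hypothesis squares : all_induced_cycles_squares e.

Lemma induced_cycle_size (x0 : T) (s : seq T) : uniq s -> 3 <= size s ->
  (forall i j : 'I_(size s), e (nth x0 s i) (nth x0 s j) = cycle_adj i j) ->
  size s = 4.
Proof.
move=> s_uniq s_ge3 s_adj; apply: (squares (c := fun i => nth x0 s i)).
split=> //; split=> // i j /eqP.
by rewrite nth_uniq // => /eqP /val_inj.
Qed.

Lemma triangle_free x y z : e x y -> e y z -> e x z -> False.
Proof.
move=> exy eyz exz.
have ne x' y' : e x' y' -> x' != y' by apply: contraTneq => ->; rewrite e_irr.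
suff: 3 = 4 by [].
apply: (@induced_cycle_size x [:: x; y; z]) => //; first by rewrite /= !inE negb_or !ne.
move=> [[|[|[|i]]] hi] [[|[|[|j]]] hj] //=;
  by rewrite /cycle_adj /= ?e_irr // e_sym.
Qed.

Lemma apex_chordless_walk_size x0 v t :
  walk e x0 t -> uniq t -> chordless e x0 t -> 1 < size t -> v \notin t ->
  e v (head x0 t) -> e v (last x0 t) ->
  (forall k, 0 < k < (size t).-1 -> ~~ e v (nth x0 t k)) ->
  size t = 3.
Proof.
move=> t_walk t_uniq t_chordless t_gt1 vt v_head v_last v_inner.
set n := size t in t_gt1 v_inner *.
have v_adj k : k < n -> e v (nth x0 t k) = (k == 0) || (k == n.-1).
  move=> kn; case: eqP => [->|k0]; first by rewrite nth0.
  case: eqP => [->|kl]; first by rewrite nth_last.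
  by apply/negbTE/v_inner; lia.
suff: size (rcons t v) = 4 by rewrite size_rcons => -[].
apply: (@induced_cycle_size x0 (rcons t v)); [by rewrite rcons_uniq vt | by rewrite size_rcons |].
move=> [i hi] [j hj]; rewrite /cycle_adj /=; rewrite size_rcons -/n in hi hj *.
rewrite !nth_rcons !succ_mod -/n; try lia.
have [i_lt|->] : i < n \/ i = n by lia.
all: have [j_lt|->] : j < n \/ j = n by lia.
- by rewrite i_lt j_lt (ltn_eqF i_lt) (ltn_eqF j_lt) chordless_walk_adj.
- rewrite i_lt ltnn !eqxx (ltn_eqF i_lt) e_sym v_adj //; apply/idP/idP; lia.
- rewrite j_lt ltnn !eqxx (ltn_eqF j_lt) v_adj //; apply/idP/idP; lia.
- by rewrite ltnn eqxx e_irr; apply/idP/idP; lia.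
Qed.

Hypothesis no_two_squares : ~ embeds_two_squares e.

Lemma two_squares_chord v u1 w u3 a b :
  e v u1 -> e v w -> e v u3 -> e a u1 -> e a w -> e b w -> e b u3 ->
  e a u3 || e b u1.
Proof.
move=> vu1 vw vu3 au1 aw bw bu3.
apply: contraT; rewrite negb_or => /andP[/negbTE au3 /negbTE bu1].
have nonadj x y z : e x y -> e y z -> e x z = false.
  by move=> xy yz; apply/negP => xz; apply: (triangle_free xy yz xz).
have uv : e u1 v by rewrite e_sym.
have [wv uv3 wb] : [/\ e w v, e u3 v & e w b] by rewrite !(e_sym w) (e_sym u3).
have u1w := nonadj _ _ _ uv vw; have u1u3 := nonadj _ _ _ uv vu3.
have ab := nonadj _ _ _ aw wb; have av := nonadj _ _ _ au1 uv.
have wu3 := nonadj _ _ _ wv vu3; have bv := nonadj _ _ _ bu3 uv3.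
(* Otherwise u1 a w b u3 v is an induced 6-cycle whose only chord is w v. *)
case: no_two_squares; apply: (@embeds_two_squaresP (nth v [:: u1; a; w; b; u3; v])).
move=> [[|[|[|[|[|[|i]]]]]] hi] // [[|[|[|[|[|[|j]]]]]] hj] //= _.
all: first [done | by rewrite e_sym].
Qed.

Section CommonNeighbours.
Variables (X : {set T}) (v : T).
Hypothesis vX : v \notin X.

Lemma common_neighbour_walk x0 t : walk e x0 t -> {subset t <= X} ->
  head x0 t != last x0 t -> e v (head x0 t) -> e v (last x0 t) ->
  exists2 a, a \in X & e a (head x0 t) && e a (last x0 t).
Proof.
have [n] := ubnP (size t); elim: n t => // n IH t /ltnSE t_le t_walk tX ends vh vl.
have t_gt1 : 1 < size t by case: t ends {t_le t_walk tX vh vl} => [|? []] //=; rewrite eqxx.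
case: (shorter_or_induced_walk t_walk) => [[u [u_walk ut u_lt uh ul]]|[t_uniq t_chordless]].
  rewrite -uh -ul; apply: IH; rewrite ?uh ?ul //; [lia | by move=> x /ut/tX].
have vt : v \notin t by apply: contra vX => /tX.
have ends_neq i j : i < size t -> j < size t -> i != j -> nth x0 t i != nth x0 t j.
  by move=> it jt; rewrite nth_uniq.
case: (classic (exists2 k, 0 < k < (size t).-1 & e v (nth x0 t k))) => [[k k_in vk]|].
  have [k_lt k1_le] : k < size t /\ 0 < k.+1 <= size t by lia.
  have [k_ne0 k_nel last_lt] : [/\ 0 != k, k != (size t).-1 & (size t).-1 < size t].
    by split; lia.
  have [a aX /andP[a_head a_k]] : exists2 a, a \in X & e a (head x0 t) && e a (nth x0 t k).
    have := IH (take k.+1 t); rewrite head_take // last_take //; apply=> //.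
    - by rewrite size_take_min; lia.
    - exact: walk_take.
    - by move=> x /mem_take/tX.
    - by rewrite -nth0 ends_neq // (ltnW t_gt1).
  have [b bX /andP[b_k b_last]] : exists2 b, b \in X & e b (nth x0 t k) && e b (last x0 t).
    have := IH (drop k t); rewrite head_drop // (last_drop x0) //; apply=> //.
    - rewrite size_drop (leq_trans _ t_le) // ltn_subrL (ltnW t_gt1) andbT.
      by case/andP: k_in.
    - exact: walk_drop.
    - by move=> x /mem_drop/tX.
    - by rewrite -nth_last ends_neq.
  case/orP: (two_squares_chord vh vk vl a_head a_k b_k b_last)
    => [a_last|b_head].
    by exists a; rewrite ?a_head ?a_last.
  by exists b; rewrite ?b_head ?b_last.
move=> no_inner.
have t3 : size t = 3.
  apply: (apex_chordless_walk_size (v := v) t_walk) => // k k_in.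
  by apply/negP => vk; apply: no_inner; exists k.
exists (nth x0 t 1); first by apply/tX/mem_nth; rewrite t3.
rewrite -nth0 -nth_last t3 e_sym.
by rewrite (t_walk 0) ?(t_walk 1) ?t3.
Qed.

Hypothesis X_connected : induced_connected e X.

Lemma common_neighbour u1 u2 : u1 \in X -> u2 \in X -> u1 != u2 ->
  e v u1 -> e v u2 -> exists2 a, a \in X & e a u1 && e a u2.
Proof.
move=> u1X u2X u12 vu1 vu2.
have /connectP[p p_path u2_last] := X_connected.2 _ _ u1X u2X.
have t_sub : {subset u1 :: p <= X}.
  elim: p u1 u1X p_path {u12 vu1 u2_last} => [|y p IHp] x xX /=.
    by move=> _ z; rewrite inE => /eqP->.
  move=> /andP[/and3P[_ yX _] /(IHp _ yX) pX] z.
  by rewrite inE => /orP[/eqP->|/pX].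
have := @common_neighbour_walk u1 (u1 :: p); rewrite /= -u2_last; apply=> //.
by apply: path_walk; apply: sub_path p_path => x y /and3P[].
Qed.

Lemma neighbours_common_neighbour (l : seq T) :
  {subset l <= [set u in X | e v u]} ->
  {in l &, forall x y, x = y} \/ exists2 a, a \in X & {in l, forall u, e a u}.
Proof.
elim: l => [|u l IH] l_nbr; first by left.
have nbr z : z \in u :: l -> z \in X /\ e v z.
  by move=> /l_nbr; rewrite inE => /andP.
have [uX vu] := nbr u (mem_head _ _).
have l_sub : {subset l <= [set u in X | e v u]}.
  by move=> z zl; apply: l_nbr; rewrite in_cons zl orbT.
have [l_const|[a aX a_l]] := IH l_sub.
  case: l l_const nbr {IH l_nbr l_sub} => [|x l] l_const nbr.
    by left=> y z; rewrite !inE => /eqP-> /eqP->.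
  have [xX vx] : x \in X /\ e v x by apply: nbr; rewrite !inE eqxx orbT.
  have y_x y : y \in x :: l -> y = x by move=> yl; apply: l_const; rewrite ?mem_head.
  have [->|ux] := eqVneq u x.
    by left=> y z; rewrite in_cons => /predU1P[->|/y_x->] /predU1P[->|/y_x->].
  have [b bX /andP[bu bx]] := common_neighbour uX xX ux vu vx.
  by right; exists b => // z; rewrite in_cons => /predU1P[->|/y_x->].
have [au|nau] := boolP (e a u).
  by right; exists a => // z; rewrite in_cons => /predU1P[->|/a_l].
case: l a_l nbr {IH l_nbr l_sub} => [|x l] a_l nbr.
  by left=> y z; rewrite !inE => /eqP-> /eqP->.
have [xX vx] : x \in X /\ e v x by apply: nbr; rewrite !inE eqxx orbT.
have ax := a_l x (mem_head _ _).
have ux : u != x by apply: contraNneq nau => ->.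
have [b bX /andP[bu bx]] := common_neighbour uX xX ux vu vx.
right; exists b => // z; rewrite in_cons => /predU1P[->//|zl].
have [_ vz] := nbr z (mem_behead (s := u :: x :: l) zl).
have := two_squares_chord vz vx vu (a_l z zl) ax bx bu.
by rewrite (negbTE nau).
Qed.

End CommonNeighbours.

Hypothesis G_connected : graph_connected e.

Lemma image_common_neighbour (X : {set T}) (f : T -> T) u v :
  induced_connected e X -> v \notin X -> u \in X -> e v u -> hom_on e X f ->
  exists w, forall z, z \in X -> e v z -> e w (f z).
Proof.
move=> X_connected vX uX vu f_hom.
have N_sub : {subset enum [set z in X | e v z] <= [set z in X | e v z]}.
  by move=> z; rewrite mem_enum.
have [l_const|[a aX a_nbr]] := neighbours_common_neighbour vX X_connected N_sub.
- have [y fu_y] : exists y, f u != y.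
    have [fu_u|] := eqVneq (f u) u; last by exists u.
    by exists v; rewrite fu_u; apply: contraNneq vX => <-.
  have [w fu_w] := neighbour_exists G_connected fu_y.
  exists w => z zX vz; rewrite (l_const z u) 1?e_sym // mem_enum inE.
    by rewrite zX vz.
  by rewrite uX vu.
- exists (f a) => z zX vz; apply: f_hom => //.
  by apply: a_nbr; rewrite mem_enum inE zX.
Qed.

Lemma hom_extend_vertex (X : {set T}) (f : T -> T) :
  induced_connected e X -> X != setT -> hom_on e X f ->
  exists (X' : {set T}) (f' : T -> T),
    [/\ X \proper X', induced_connected e X', hom_on e X' f' & {in X, f' =1 f}].
Proof.
move=> X_connected XT f_hom.
have [x xX] := set0Pn _ X_connected.1.
have /subsetPn[y _ yX] : ~~ (setT \subset X) by rewrite subTset.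
have [u [v [uX vX uv]]] := boundary_edge G_connected xX yX.
have vu : e v u by rewrite e_sym.
have [w w_nbr] := image_common_neighbour X_connected vX uX vu f_hom.
exists (v |: X), (fun z => if z == v then w else f z); split.
- by rewrite properUr // sub1set.
- exact: induced_connected_setU1 uv.
- exact: hom_on_setU1.
- by move=> z zX /=; case: eqP => // zv; rewrite -zv zX in vX.
Qed.

End SquareGraphs.

Theorem lemma5p2 (T : finType) (e : rel T) :
  symmetric e -> irreflexive e ->
  graph_connected e ->
  all_induced_cycles_squares e ->
  ~ embeds_two_squares e ->
  C_HH e.
Proof.
move=> e_sym e_irr G_connected squares no_two_squares X f.
have [n] := ubnP #|~: X|; elim: n X f => // n IH X f X_lt X_connected f_hom.
have [XT|XT] := eqVneq X setT.
  by exists f; split=> // x y; apply: f_hom; rewrite XT inE.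
have [X' [f' [XX' X'_connected f'_hom f'_f]]] :=
  hom_extend_vertex e_sym e_irr squares no_two_squares G_connected X_connected XT f_hom.
have X'_lt : #|~: X'| < n.
  suff : #|~: X'| < #|~: X| by lia.
  by apply: proper_card; rewrite properC.
have [g [g_hom g_f']] := IH X' f' X'_lt X'_connected f'_hom.
by exists g; split=> // x xX; rewrite g_f' ?f'_f // (subsetP (proper_sub XX')).
Qed.
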